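(* Let $p$ be a prime and $S$ a finite $p$-group. If $L$ is a subgroup of $S$ with $\mathfrak{X}(S)\leq L\leq S$, then $\mathfrak{X}(S)\leq \mathfrak{X}(L)$.
   Context: For a finite $p$-group $G$ and subgroups $A,B$, write $[A,B;1]=[A,B]$ and $[A,B;k]=[[A,B;k-1],B]$. $\Omega_1(G)$ denotes the subgroup generated by the elements of order $p$ in $G$. The Oliver subgroup $\mathfrak{X}(G)$ of a finite $p$-group $G$ is the unique largest normal subgroup $K$ of $G$ admitting a chain $1=Q_0\leq Q_1\leq\cdots\leq Q_n=K$ of normal subgroups $Q_i\unlhd G$ such that $[\Omega_1(C_G(Q_{i-1})),Q_i;p-1]=1$ for each $1\leq i\leq n$. For a subgroup $L\leq S$, $\mathfrak{X}(L)$ is the Oliver subgroup of $L$ regarded as a $p$-group in its own right (normality and centralizers taken in $L$). *)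

From mathcomp Require Import all_boot all_fingroup all_solvable.
From mathcomp Require Import boolp.
Set Implicit Arguments. Unset Strict Implicit. Unset Printing Implicit Defensive.
Local Open Scope group_scope.

Section Oliver.
Variable gT : finGroupType.

Definition Omega1 (p : nat) (A : {set gT}) : {set gT} :=
  <<[set x in A | #[x] == p]>>.

Fixpoint itercomm (A B : {set gT}) (k : nat) : {set gT} :=
  if k is k'.+1 then [~: itercomm A B k', B] else A.

Definition oliver_chain (p : nat) (G K : {set gT}) : Prop :=
  exists (n : nat) (Q : nat -> {group gT}),
    [/\ Q 0%N :=: 1, Q n :=: K,
        forall i, (i < n)%N -> Q i \subset Q i.+1,
        forall i, (i <= n)%N -> Q i <| G &
        forall i, (0 < i <= n)%N ->
          itercomm (Omega1 p 'C_G(Q i.-1)) (Q i) p.-1 :=: 1].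

(* The Oliver subgroup X(G): the join of all subgroups admitting such a
   chain (this is the unique largest one). *)
Definition oliver (p : nat) (G : {set gT}) : {set gT} :=
  <<[set x | `[< exists K : {group gT}, oliver_chain p G K /\ x \in K >] ]>>.

End Oliver.

From mathcomp Require Import all_boot all_fingroup all_solvable.
From mathcomp Require Import boolp.
Local Open Scope group_scope.

(* Every term of a chain witnessing K in the Oliver subgroup of G lies in K,
   hence in any H between K and G; normality in G descends to H, and as
   'C_H(Q) <= 'C_G(Q) while Omega_1 and iterated commutators are monotone,
   the commutator condition descends as well.  So every such chain for S with
   K <= X(S) <= L is a chain for L. *)

Section OliverChainRestriction.
Set Implicit Arguments.
Unset Strict Implicit.
Variable gT : finGroupType.
Implicit Types (p k : nat) (A B C : {set gT}) (G H K : {group gT}).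

Lemma Omega1S p A B : A \subset B -> Omega1 p A \subset Omega1 p B.
Proof.
move=> sAB; apply: genS; apply/subsetP => x; rewrite !inE => /andP[xA ->].
by rewrite (subsetP sAB).
Qed.

Canonical Omega1_group p A := [group of Omega1 p A].

Lemma itercommSl A B C k : A \subset B -> itercomm A C k \subset itercomm B C k.
Proof. by move=> sAB; elim: k => [|k IHk] //=; apply: commgSS. Qed.

Lemma itercomm_trivgS (A B : {group gT}) C k :
  A \subset B -> itercomm B C k :=: 1 -> itercomm A C k :=: 1.
Proof.
move=> sAB; have := itercommSl C k sAB.
by case: k => [|k] /= sAB_k /trivgP sB1; apply/trivgP/(subset_trans sAB_k).
Qed.

Lemma subset_chain_last (Q : nat -> {group gT}) n i :
  (forall j, j < n -> Q j \subset Q j.+1)%N -> (i <= n)%N -> Q i \subset Q n.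
Proof.
move=> incrQ le_in.
apply: (homo_leq_in (D := [pred j | j <= n]%N)
                    (r := fun A B : {group gT} => A \subset B)) => //.
- by move=> y x z; apply: subset_trans.
- by move=> j l _ ln m /andP[_ /ltnW /leq_trans]; apply.
- by move=> j _; apply: incrQ.
- exact: leqnn.
Qed.

Lemma oliver_chainS p G H K :
  K \subset H -> H \subset G -> oliver_chain p G K -> oliver_chain p H K.
Proof.
move=> sKH sHG [n [Q [Q0 Qn incrQ nQG commQ]]].
have sQH i : (i <= n)%N -> Q i \subset H.
  by move=> le_in; rewrite (subset_trans _ sKH) // -Qn subset_chain_last.
exists n, Q; split=> // [i le_in | i lt0in].
  exact: normalS (sQH i le_in) sHG (nQG i le_in).
by apply: itercomm_trivgS (commQ i lt0in); apply/Omega1S/setSI.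
Qed.

Lemma oliver_chain_sub_oliver p G K : oliver_chain p G K -> K \subset oliver p G.
Proof.
move=> chK; apply/subsetP => x Kx; apply: mem_gen; rewrite inE.
by apply/asboolP; exists K.
Qed.

Lemma oliver_subG p G H :
  (forall K, oliver_chain p G K -> K \subset H) -> oliver p G \subset H.
Proof.
move=> sub_chains; rewrite gen_subG; apply/subsetP => x.
by rewrite inE => /asboolP[K [/sub_chains /subsetP sKH /sKH]].
Qed.

End OliverChainRestriction.

Theorem lemma3p1 (gT : finGroupType) (p : nat) (S L : {group gT}) :
  prime p -> p.-group S -> L \subset S ->
  oliver p S \subset L -> oliver p S \subset oliver p L.
Proof.
move=> _ _ sLS sXL; apply: oliver_subG => K chK.
have sKL := subset_trans (oliver_chain_sub_oliver chK) sXL.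
exact/oliver_chain_sub_oliver/(oliver_chainS sKL sLS chK).
Qed.
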